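(* Let $N\le M$, let $X_N=[x_1\ \cdots\ x_N]^\top\in\mathbb{R}^{N\times M}$ have full row rank, let $Y_N=[y_1\ \cdots\ y_N]^\top\in\mathbb{R}^N$, and let $\theta_{MN}=X_N^+Y_N$ with $X_N^+=X_N^\top(X_NX_N^\top)^{-1}$. Fix $\sigma^2>0$, a test vector $x\in\mathbb{R}^M$ and a test label $y\in\mathbb{R}$. Let $\lambda_y>0$ be a regularization factor such that the vector $$\hat\theta(z^N;x,y)=\theta_N+\left(X_{N+1}^\top X_{N+1}+\lambda_y I\right)^{-1}x\,(y-x^\top\theta_N),\qquad \theta_N=\left(X_N^\top X_N+\lambda_y I\right)^{-1}X_N^\top Y_N,$$ where $X_{N+1}=[x_1\ \cdots\ x_N\ x]^\top$, satisfies the norm constraint $\|\hat\theta(z^N;x,y)\|=\|\theta_{MN}\|$. Let $$K_0=1+x^\top X_N^+X_N^{+\top}x,\qquad \|x_\perp\|^2=x^\top\left[I-X_N^+X_N\right]x .$$ Then $$p_{\hat\theta(z^N;x,y)}(y|x)\le\frac{1}{\sqrt{2\pi\sigma^2}}\exp\left\{-\frac{(y-x^\top\theta_N)^2}{2\sigma^2K_0^2\left(1+\frac{\|x_\perp\|^2}{K_0\lambda_y}\right)^2}\right\}.$$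
   Context: For $\theta\in\mathbb{R}^M$, $p_\theta(y|x)=\frac{1}{\sqrt{2\pi\sigma^2}}\exp\{-\frac{1}{2\sigma^2}(y-x^\top\theta)^2\}$ is the Gaussian linear-regression likelihood with noise variance $\sigma^2$. $\|\cdot\|$ is the Euclidean norm. The vector $\hat\theta(z^N;x,y)$ is the ridge-regression solution (regularization $\lambda_y$) on the training set augmented by $(x,y)$, written in recursive least-squares form; it is the ''genie'' learner of the norm-constrained hypothesis set $\{p_\theta:\|\theta\|\le\|\theta_{MN}\|\}$. *)

From HB Require Import structures.
From mathcomp Require Import all_boot all_order all_algebra.
From mathcomp Require Import all_classical all_reals all_analysis.
Set Implicit Arguments. Unset Strict Implicit. Unset Printing Implicit Defensive.
Import Order.TTheory GRing.Theory Num.Theory.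
Local Open Scope ring_scope.

Section Defs.
Variable R : realType.

Definition sc (A : 'M[R]_1) : R := A 0 0.

Definition enorm {M : nat} (v : 'cV[R]_M) : R := Num.sqrt (\sum_i (v i 0) ^+ 2).

(* Moore-Penrose pseudo-inverse for a full-row-rank matrix: X^+ = X^T (X X^T)^{-1} *)
Definition pinvR {N M : nat} (X : 'M[R]_(N, M)) : 'M[R]_(M, N) :=
  X^T *m invmx (X *m X^T).

Definition gauss_lik {M : nat} (s2 : R) (theta : 'cV[R]_M) (x : 'cV[R]_M) (y : R) : R :=
  (Num.sqrt (2 * pi * s2))^-1 * expR (- (y - sc (x^T *m theta)) ^+ 2 / (2 * s2)).

Definition theta_MN {N M : nat} (X : 'M[R]_(N, M)) (Y : 'cV[R]_N) : 'cV[R]_M :=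
  pinvR X *m Y.

Definition theta_ridge {N M : nat} (lam : R) (X : 'M[R]_(N, M)) (Y : 'cV[R]_N) : 'cV[R]_M :=
  invmx (X^T *m X + lam%:M) *m X^T *m Y.

Definition theta_hat {N M : nat} (lam : R) (X : 'M[R]_(N, M)) (Y : 'cV[R]_N)
    (x : 'cV[R]_M) (y : R) : 'cV[R]_M :=
  let XN1 := col_mx X x^T in
  theta_ridge lam X Y +
  (y - sc (x^T *m theta_ridge lam X Y)) *: (invmx (XN1^T *m XN1 + lam%:M) *m x).

Definition K0 {N M : nat} (X : 'M[R]_(N, M)) (x : 'cV[R]_M) : R :=
  1 + sc (x^T *m pinvR X *m (pinvR X)^T *m x).

Definition xperp2 {N M : nat} (X : 'M[R]_(N, M)) (x : 'cV[R]_M) : R :=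
  sc (x^T *m (1%:M - pinvR X *m X) *m x).

End Defs.

From HB Require Import structures.
From mathcomp Require Import all_boot all_order all_algebra.
From mathcomp Require Import all_classical all_reals all_analysis.
From mathcomp Require Import ring lra.
Set Implicit Arguments. Unset Strict Implicit. Unset Printing Implicit Defensive.
Import Order.TTheory GRing.Theory Num.Theory.
Local Open Scope ring_scope.

(* The residual of the genie learner at (x, y) is the ridge residual
   e = y - x^T theta_N shrunk by the Sherman-Morrison factor 1 / (1 + a), where
   a = x^T (X^T X + lam I)^-1 x.  Write x = X^T g + x_perp with g = X^+T x and
   X x_perp = 0.  Since a = max_w (2 w^T x - w^T (X^T X + lam I) w), AM-GM on the
   two cross terms w^T X^T g and w^T x_perp gives a <= |g|^2 + |x_perp|^2 / lam,
   i.e. 1 + a <= K0 + |x_perp|^2 / lam, so the residual is at least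
   |e| / (K0 + |x_perp|^2 / lam) in absolute value. *)

Section DotProduct.
Variables (R : comPzRingType) (n : nat).
Implicit Types u v w : 'cV[R]_n.

Definition dot u v : R := (u^T *m v) 0 0.

Lemma dotE u v : dot u v = \sum_i u i 0 * v i 0.
Proof. by rewrite /dot !mxE; apply: eq_bigr => i _; rewrite !mxE. Qed.

Lemma dotC u v : dot u v = dot v u.
Proof. by rewrite !dotE; apply: eq_bigr => i _; rewrite mulrC. Qed.

Lemma dotDr u v w : dot u (v + w) = dot u v + dot u w.
Proof. by rewrite /dot mulmxDr mxE. Qed.

Lemma dotBr u v w : dot u (v - w) = dot u v - dot u w.
Proof. by rewrite /dot mulmxBr !mxE. Qed.

Lemma dotZr u v k : dot u (k *: v) = k * dot u v.
Proof. by rewrite /dot -scalemxAr mxE. Qed.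

Lemma dotDl u v w : dot (u + v) w = dot u w + dot v w.
Proof. by rewrite dotC dotDr !(dotC w). Qed.

Lemma dotBl u v w : dot (u - v) w = dot u w - dot v w.
Proof. by rewrite dotC dotBr !(dotC w). Qed.

Lemma dotZl u v k : dot (k *: u) v = k * dot u v.
Proof. by rewrite dotC dotZr dotC. Qed.

Lemma dot0r u : dot u 0 = 0.
Proof. by rewrite /dot mulmx0 mxE. Qed.

Lemma dot0l u : dot 0 u = 0.
Proof. by rewrite dotC dot0r. Qed.

End DotProduct.

Lemma dot_mulmx (R : comPzRingType) m n (A : 'M[R]_(m, n)) u v :
  dot u (A *m v) = dot (A^T *m u) v.
Proof. by rewrite /dot trmx_mul trmxK mulmxA. Qed.

Section DotProductReal.
Variables (R : realDomainType) (n : nat).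
Implicit Types u v : 'cV[R]_n.

Lemma dot_ge0 u : 0 <= dot u u.
Proof. by rewrite dotE; apply: sumr_ge0 => i _; rewrite -expr2 sqr_ge0. Qed.

Lemma dot_eq0 u : (dot u u == 0) = (u == 0).
Proof.
apply/idP/eqP => [|->]; last by rewrite dot0r.
rewrite dotE psumr_eq0 => [/allP u0|i _]; last by rewrite -expr2 sqr_ge0.
apply/matrixP => i j; rewrite ord1 mxE.
by have /implyP/(_ isT) := u0 i (mem_index_enum _); rewrite mulf_eq0 orbb => /eqP.
Qed.

Lemma dot_AMGM u v : 2 * dot u v <= dot u u + dot v v.
Proof.
by have := dot_ge0 (u - v); rewrite !dotBl !dotBr [dot v u]dotC; lra.
Qed.

End DotProductReal.

Section RidgeMatrix.
Variables (R : realFieldType) (k n : nat).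
Implicit Types (Z : 'M[R]_(k, n)) (v : 'cV[R]_n).

Lemma unitmx_of_definite (S : 'M[R]_n) :
  (forall v, dot v (S *m v) = 0 -> v = 0) -> S \in unitmx.
Proof.
move=> Sdef; rewrite -unitmx_tr -row_free_unit; apply: inj_row_free => u uS0.
apply: trmx_inj; rewrite trmx0; apply: Sdef.
by rewrite -[S]trmxK -trmx_mul uS0 trmx0 dot0r.
Qed.

Lemma ridge_formE Z (lam : R) v :
  dot v ((Z^T *m Z + lam%:M) *m v) = dot (Z *m v) (Z *m v) + lam * dot v v.
Proof. by rewrite mulmxDl dotDr -mulmxA dot_mulmx trmxK mul_scalar_mx dotZr. Qed.

Lemma ridge_unitmx Z (lam : R) : 0 < lam -> Z^T *m Z + lam%:M \in unitmx.
Proof.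
move=> lam_gt0; apply: unitmx_of_definite => v; rewrite ridge_formE => form0.
apply/eqP; rewrite -dot_eq0; apply/eqP.
by have := dot_ge0 (Z *m v); have := dot_ge0 v; nra.
Qed.

End RidgeMatrix.

Lemma gram_unitmx (R : realFieldType) k n (X : 'M[R]_(k, n)) :
  row_free X -> X *m X^T \in unitmx.
Proof.
move=> X_free; apply: unitmx_of_definite => v.
rewrite -mulmxA dot_mulmx => /eqP; rewrite dot_eq0 => /eqP XTv0.
apply: trmx_inj; apply/eqP; rewrite trmx0 -(mulmx_free_eq0 _ X_free).
by rewrite -[X in _ *m X]trmxK -trmx_mul XTv0 trmx0.
Qed.

Lemma rank_one_update_dot (R : comUnitRingType) n (A : 'M[R]_n) (x : 'cV_n) :
  A \in unitmx -> A + x *m x^T \in unitmx ->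
  (1 - dot x (invmx (A + x *m x^T) *m x)) * (1 + dot x (invmx A *m x)) = 1.
Proof.
move=> A_unit B_unit; set p := invmx _ *m x; set t := dot x p.
have Ap : A *m p = (1 - t) *: x.
  have : (A + x *m x^T) *m p = x by rewrite mulKVmx.
  rewrite mulmxDl -mulmxA [x^T *m p]mx11_scalar mul_mx_scalar => Bp.
  by rewrite -[A *m p](addrK (t *: x)) Bp scalerBl scale1r.
have t_fix : t = (1 - t) * dot x (invmx A *m x).
  by rewrite {1}/t -[p](mulKmx A_unit) Ap -scalemxAr dotZr.
by rewrite mulrDr mulr1 -t_fix subrK.
Qed.

Section RidgeForm.
Variables (R : realFieldType) (k n : nat) (Z : 'M[R]_(k, n)) (lam : R).
Hypothesis lam_gt0 : 0 < lam.
Let A := Z^T *m Z + lam%:M.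

Lemma ridge_invform_ge0 x : 0 <= dot x (invmx A *m x).
Proof.
have A_unit : A \in unitmx by exact: ridge_unitmx.
rewrite -{1}[x](mulKVmx A_unit) dotC ridge_formE.
by apply: addr_ge0; rewrite ?mulr_ge0 ?dot_ge0 ?ltW.
Qed.

Lemma ridge_invform_le g xp :
  dot (Z^T *m g + xp) (invmx A *m (Z^T *m g + xp)) <= dot g g + dot xp xp / lam.
Proof.
have A_unit : A \in unitmx by exact: ridge_unitmx.
set x := Z^T *m g + xp; set w := invmx A *m x; set a := dot x w.
have a_form : a = dot (Z *m w) (Z *m w) + lam * dot w w.
  by rewrite -ridge_formE /w mulKVmx // dotC.
have a_split : a = dot g (Z *m w) + dot xp w.
  by rewrite /a dotDl -dot_mulmx.
have := dot_AMGM g (Z *m w); have := dot_AMGM (lam *: w) xp.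
rewrite !dotZl !dotZr [dot w xp]dotC => amgm2 /(ler_wpM2l (ltW lam_gt0)) amgm1.
have split_lam : 2 * (a * lam) = lam * (2 * dot g (Z *m w)) + 2 * (lam * dot xp w).
  by rewrite a_split; ring.
have form_lam : a * lam = lam * dot (Z *m w) (Z *m w) + lam * (lam * dot w w).
  by rewrite a_form; ring.
rewrite -(ler_pM2r lam_gt0) mulrDl divfK ?gt_eqF //; lra.
Qed.

End RidgeForm.

Section PseudoInverse.
Variables (R : realType) (N M : nat) (X : 'M[R]_(N, M)).

Definition xperp (x : 'cV[R]_M) := (1%:M - pinvR X *m X) *m x.

Lemma trmx_pinvR_mul : (pinvR X *m X)^T = pinvR X *m X.
Proof. by rewrite /pinvR trmx_mul trmx_mul trmx_inv trmx_mul trmxK mulmxA. Qed.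

Lemma pinvR_decomposition x : x = X^T *m ((pinvR X)^T *m x) + xperp x.
Proof.
by rewrite /xperp mulmxA -trmx_mul trmx_pinvR_mul mulmxBl mul1mx addrC subrK.
Qed.

Lemma K0E x : K0 X x = 1 + dot ((pinvR X)^T *m x) ((pinvR X)^T *m x).
Proof.
by rewrite /K0 /sc /dot; move: (pinvR X) => P; rewrite trmx_mul trmxK !mulmxA.
Qed.

Hypothesis X_free : row_free X.

Lemma mulmx_pinvR : X *m pinvR X = 1%:M.
Proof. by rewrite /pinvR mulmxA mulmxV // gram_unitmx. Qed.

Lemma mulmx_xperp x : X *m xperp x = 0.
Proof. by rewrite /xperp mulmxA mulmxBr mulmx1 mulmxA mulmx_pinvR mul1mx subrr mul0mx. Qed.

Lemma xperp2E x : xperp2 X x = dot (xperp x) (xperp x).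
Proof.
rewrite {1}(_ : xperp x = x - X^T *m ((pinvR X)^T *m x)); last first.
  by rewrite {2}(pinvR_decomposition x) addrAC subrr add0r.
rewrite dotBl [dot (X^T *m _) _]dotC (dot_mulmx X^T) trmxK mulmx_xperp dot0l subr0.
by rewrite /xperp2 /sc /dot mulmxA.
Qed.

End PseudoInverse.

Lemma ridge_col_mxE (R : pzRingType) k n (lam : R) (X : 'M[R]_(k, n)) (x : 'cV[R]_n) :
  (col_mx X x^T)^T *m col_mx X x^T + lam%:M = X^T *m X + lam%:M + x *m x^T.
Proof. by rewrite tr_col_mx trmxK mul_row_col addrAC. Qed.

Lemma theta_hat_residual (R : realType) N M (lam : R) (X : 'M[R]_(N, M)) Y x y :
  y - sc (x^T *m theta_hat lam X Y x y) =
  (y - sc (x^T *m theta_ridge lam X Y)) *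
  (1 - dot x (invmx (X^T *m X + lam%:M + x *m x^T) *m x)).
Proof.
rewrite /theta_hat ridge_col_mxE.
rewrite -[sc (x^T *m (_ + _))]/(dot x (_ + _)) dotDr dotZr.
by rewrite /dot /sc; ring.
Qed.

Lemma gauss_exponent_le (R : realFieldType) (s2 lam K r d e : R) :
  0 < s2 -> 0 < lam -> 1 <= K -> 0 <= r -> 0 < d -> d <= K + r / lam ->
  - (e / d) ^+ 2 / (2 * s2) <=
  - e ^+ 2 / (2 * s2 * K ^+ 2 * (1 + r / (K * lam)) ^+ 2).
Proof.
move=> s2_gt0 lam_gt0 K_ge1 r_ge0 d_gt0 d_le.
have -> : 2 * s2 * K ^+ 2 * (1 + r / (K * lam)) ^+ 2 = 2 * s2 * (K + r / lam) ^+ 2.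
  by field; rewrite !gt_eqF // (lt_le_trans ltr01).
have L_gt0 : 0 < K + r / lam by rewrite (lt_le_trans d_gt0).
rewrite !mulNr lerN2 invfM mulrA mulrAC ler_pM2r ?invr_gt0 ?mulr_gt0 //.
rewrite expr_div_n ler_wpM2l ?sqr_ge0 // lef_pV2 ?posrE ?exprn_gt0 //.
by rewrite ler_pXn2r // nnegrE ltW.
Qed.

Theorem lemma1 (R : realType) (N M : nat) (X : 'M[R]_(N, M)) (Y : 'cV[R]_N)
    (s2 : R) (x : 'cV[R]_M) (y : R) (lam : R) :
  (N <= M)%N ->
  \rank X = N ->
  0 < s2 ->
  0 < lam ->
  enorm (theta_hat lam X Y x y) = enorm (theta_MN X Y) ->
  gauss_lik s2 (theta_hat lam X Y x y) x y <=
    (Num.sqrt (2 * pi * s2))^-1 *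
    expR (- (y - sc (x^T *m theta_ridge lam X Y)) ^+ 2 /
          (2 * s2 * (K0 X x) ^+ 2 * (1 + xperp2 X x / (K0 X x * lam)) ^+ 2)).
Proof.
move=> _ X_rank s2_gt0 lam_gt0 _.
have X_free : row_free X by rewrite /row_free X_rank.
set A := X^T *m X + lam%:M.
set a := dot x (invmx A *m x).
have a_ge0 : 0 <= a by exact: ridge_invform_ge0.
have shrink : 1 - dot x (invmx (A + x *m x^T) *m x) = (1 + a)^-1.
  have B_unit : A + x *m x^T \in unitmx.
    by rewrite -ridge_col_mxE ridge_unitmx.
  have := rank_one_update_dot (ridge_unitmx X lam_gt0) B_unit.
  by move=> /(canRL (mulfK _)) ->; rewrite ?div1r // gt_eqF // ltr_pwDl.
rewrite /gauss_lik theta_hat_residual -/A shrink.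
rewrite ler_wpM2l ?invr_ge0 ?sqrtr_ge0 // ler_expR K0E (xperp2E X_free).
apply: gauss_exponent_le; rewrite ?lerDl ?dot_ge0 ?ltr_pwDl //.
have := ridge_invform_le X lam_gt0 ((pinvR X)^T *m x) (xperp X x).
by rewrite -pinvR_decomposition -addrA lerD2l.
Qed.
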